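(* Fix an index $k\ge 0$ and approximations $x_1^{[k]},\dots,x_m^{[k]}\in(a,b)$. For each $i=1,\dots,m$ assume that the iteration $$x_i^{[k+1]} = x_i^{[k]} - \alpha_i f(x_i^{[k]})\Big[f'(x_i^{[k]}) - f(x_i^{[k]})\,Q_i'(x_i^{[k]})\big[(\alpha_i+1)Q_i(x_i^{[k]})\big]^{-1}\Big]^{-1}\qquad(\ast)$$ is well defined, i.e. $Q_i(x_i^{[k]})\neq 0$ and the bracket being inverted is nonzero. Suppose there are real numbers $A_{is},B_{is}$ ($i,s=1,\dots,m$) such that for every $i$ $$\Phi_i^{(\alpha_i+1)}(x_i)=\sum_{s=1}^m A_{is}\,(x_s^{[k]}-x_s),\qquad \Psi_i^{(\alpha_i-1)}(x_i)=(\alpha_i+1)\big[f^{(\alpha_i)}(x_i)\big]^2+\sum_{s=1}^m B_{is}\,(x_s^{[k]}-x_s).$$ Let $A,B,M,K,P$ be constants with $|A_{is}|\le A$ and $|B_{is}|\le B$ for all $i,s$; $|\Phi_i^{(\alpha_i+2)}(x)|\le M$ and $|\Psi_i^{(\alpha_i)}(x)|\le K$ for all $i$ and all $x$ in the closed interval with endpoints $x_i$ and $x_i^{[k]}$; and $0<P\le |f^{(\alpha_i)}(x_i)|$ for all $i$. Let $c>0$ and $0<q<1$ be real numbers such that for every $i=1,\dots,m$ $$c^2\Big[mA+\frac{M}{\alpha_i+2}\Big] < (\alpha_i+1)^2\alpha_i P^2 - c(\alpha_i+1)\big[\alpha_i B m+K\big].$$ If $|x_i^{[k]}-x_i|<c\,q^{3^k}$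 for all $i=1,\dots,m$, then $|x_i^{[k+1]}-x_i|<c\,q^{3^{k+1}}$ for all $i=1,\dots,m$. (In particular, the method $(\ast)$ has third order of convergence.)
   Context: Let $(a,b)$ be a real interval and let $\varphi_0,\dots,\varphi_n$ be infinitely differentiable real functions on $(a,b)$ forming a Chebyshev system there. Let $\alpha_1,\dots,\alpha_m$ be positive integers with $\sum_{j=1}^m\alpha_j=n$. For $x,y_1,\dots,y_m\in(a,b)$ let $D(x;y_1,\dots,y_m)$ denote the determinant of the $(n+1)\times(n+1)$ matrix whose first row is $(\varphi_0(x),\dots,\varphi_n(x))$, followed, for $j=1,\dots,m$ in order and for $r=0,1,\dots,\alpha_j-1$ in order, by the rows $(\varphi_0^{(r)}(y_j),\dots,\varphi_n^{(r)}(y_j))$. Let $x_1,\dots,x_m\in(a,b)$ be distinct and set $f(x)=D(x;x_1,\dots,x_m)$; this is a generalized polynomial $\sum_{j=0}^n a_j\varphi_j(x)$ having zeros $x_1,\dots,x_m$ of multiplicities $\alpha_1,\dots,\alpha_m$. Given approximations $x_1^{[k]},\dots,x_m^{[k]}\in(a,b)$ of these zeros, define for $i=1,\dots,m$ $$Q_i(x)=\frac{\partial^{\alpha_i}}{\partial x^{\alpha_i}}D(x;x_1^{[k]},\dots,x_m^{[k]}),$$ $$\Phi_i(x)=(\alpha_i+1)\big[(x-x_i)f'(x)-\alpha_i f(x)\big]Q_i(x)-(x-x_i)f(x)Q_i'(x),\qquad \Psi_i(x)=(\alpha_i+1)f'(x)Q_i(x)-f(x)Q_i'(x).$$ Derivatives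 of order $0$ mean the function itself. *)

From Stdlib Require Import Reals.
From mathcomp Require Import all_boot all_algebra.
From mathcomp Require Import Rstruct.
From Coquelicot Require Import Coquelicot.

Set Implicit Arguments.
Unset Strict Implicit.
Unset Printing Implicit Defensive.
Local Open Scope R_scope.

(* Chebyshev system on (a,b): for any n+1 pairwise distinct points of (a,b)
   the collocation matrix [phi_c(t_p)] is nonsingular (equivalently, every
   nontrivial generalized polynomial sum_c a_c phi_c has at most n distinct
   zeros in (a,b)). *)
Definition chebyshev_system (a b : R) (n : nat) (phi : 'I_n.+1 -> R -> R) : Prop :=
  forall t : 'I_n.+1 -> R, injective t -> (forall p, a < t p < b) ->
    determinant (\matrix_(p, c) phi c (t p)) <> 0.

Definition smooth_on (a b : R) (g : R -> R) : Prop :=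
  forall (k : nat) (x : R), a < x < b -> ex_derive_n g k x.

(* The rows following the first one: for j = 1..m in order and r = 0..alpha_j-1
   in order, the row (phi_0^(r)(y_j), ..., phi_n^(r)(y_j)). *)
Definition lower_rows (n m : nat) (phi : 'I_n.+1 -> R -> R) (alpha : 'I_m -> nat)
    (y : 'I_m -> R) : seq ('I_n.+1 -> R) :=
  flatten [seq [seq (fun c : 'I_n.+1 => Derive_n (phi c) r (y j)) | r <- seq.iota 0%N (alpha j)]
          | j <- enum 'I_m].

Definition Dmatrix (n m : nat) (phi : 'I_n.+1 -> R -> R) (alpha : 'I_m -> nat)
    (x : R) (y : 'I_m -> R) : 'M[R]_n.+1 :=
  \matrix_(p, c) if (p == 0%N :> nat) then phi c x
                 else nth (fun _ => 0) (lower_rows phi alpha y) p.-1 c.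

Definition Ddet (n m : nat) (phi : 'I_n.+1 -> R -> R) (alpha : 'I_m -> nat)
    (x : R) (y : 'I_m -> R) : R :=
  determinant (Dmatrix phi alpha x y).


Definition fpoly n m phi alpha (xs : 'I_m -> R) : R -> R :=
  fun x => @Ddet n m phi alpha x xs.

Definition Qfun n m phi alpha (xk : 'I_m -> R) (i : 'I_m) : R -> R :=
  fun x => Derive_n (fun t => @Ddet n m phi alpha t xk) (alpha i) x.

Definition Phifun n m phi alpha (xs xk : 'I_m -> R) (i : 'I_m) : R -> R :=
  fun x =>
    let f := @fpoly n m phi alpha xs in
    let Q := @Qfun n m phi alpha xk i in
    (INR (alpha i) + 1) * ((x - xs i) * Derive f x - INR (alpha i) * f x) * Q x
    - (x - xs i) * f x * Derive Q x.

Definition Psifun n m phi alpha (xs xk : 'I_m -> R) (i : 'I_m) : R -> R :=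
  fun x =>
    let f := @fpoly n m phi alpha xs in
    let Q := @Qfun n m phi alpha xk i in
    (INR (alpha i) + 1) * Derive f x * Q x - f x * Derive Q x.

Definition iter_bracket n m phi alpha (xs xk : 'I_m -> R) (i : 'I_m) : R :=
  let f := @fpoly n m phi alpha xs in
  let Q := @Qfun n m phi alpha xk i in
  Derive f (xk i) - f (xk i) * Derive Q (xk i) / ((INR (alpha i) + 1) * Q (xk i)).

Definition next_iter n m phi alpha (xs xk : 'I_m -> R) (i : 'I_m) : R :=
  let f := @fpoly n m phi alpha xs in
  xk i - INR (alpha i) * f (xk i) / @iter_bracket n m phi alpha xs xk i.

Local Open Scope ring_scope.
Definition lincomb (m : nat) (C d : 'I_m -> R) : R :=
  \sum_(s < m) C s * d s.

From Stdlib Require Import Reals Lra Psatz.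
From mathcomp Require Import all_boot all_algebra.
From mathcomp Require Import Rstruct.
From Coquelicot Require Import Coquelicot.

(* The step error is a quotient: with d := x_i^[k] - x_i, the value Psi_i(x_i^[k]) is
   (alpha_i + 1) Q_i(x_i^[k]) times the inverted bracket B, and Phi_i(x_i^[k]) is the same
   factor times d B - alpha_i f(x_i^[k]); hence x_i^[k+1] - x_i = Phi_i(x_i^[k]) / Psi_i(x_i^[k]).
   The derivatives of f of order < alpha_i at x_i are determinants with two equal rows, so f
   vanishes to order alpha_i at x_i; consequently Phi_i vanishes to order alpha_i + 1 and Psi_i to
   order alpha_i - 1.  Taylor's formula with Lagrange remainder then gives
     x_i^[k+1] - x_i = d^2 (Phi_i^(alpha_i+1)(x_i) + d/(alpha_i+2) Phi_i^(alpha_i+2)(z))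
                       / (alpha_i (alpha_i+1)
                          (Psi_i^(alpha_i-1)(x_i) + d/alpha_i Psi_i^(alpha_i)(w))).
   For |d| < delta := c q^(3^k) <= c the second factor of the numerator is at most
   delta (m A + M/(alpha_i+2)) and, by the hypothesis on c, the denominator exceeds
   c^2 (m A + M/(alpha_i+2)); so the error is below delta^3 / c^2 = c q^(3^(k+1)). *)

Set Implicit Arguments.
Unset Strict Implicit.
Local Open Scope R_scope.

Lemma Derive_nS (f : R -> R) k x : Derive_n f k.+1 x = Derive_n (Derive f) k x.
Proof. by rewrite -Nat.add_1_r -Derive_n_comp. Qed.

Definition vanishes_to (g : R -> R) (p : nat) (x0 : R) : Prop :=
  forall j, (j < p)%N -> Derive_n g j x0 = 0.

Lemma vanishes_to_le g p p' x0 : (p <= p')%N -> vanishes_to g p' x0 -> vanishes_to g p x0.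
Proof. by move=> le_pp' g0 j lt_jp; apply: g0; apply: leq_trans le_pp'. Qed.

Lemma vanishes_to_Derive g p x0 : vanishes_to g p.+1 x0 -> vanishes_to (Derive g) p x0.
Proof. by move=> g0 j lt_jp; rewrite -Derive_nS; apply: g0. Qed.

Lemma vanishes_toZ c g p x0 : vanishes_to g p x0 -> vanishes_to (fun t => c * g t) p x0.
Proof. by move=> g0 j lt_jp; rewrite Derive_n_scal_l g0 // Rmult_0_r. Qed.

Section SmoothOn.
Variables a b : R.

Lemma locally_in_interval x : a < x < b -> locally x (fun y => a < y < b).
Proof. by case=> ax xb; apply: (locally_interval _ x (Finite a) (Finite b)). Qed.

Lemma smooth_on_locally g p x : smooth_on a b g -> a < x < b ->
  locally x (fun y => forall k, (k <= p)%coq_nat -> ex_derive_n g k y).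
Proof. by move=> sg /locally_in_interval; apply: filter_imp => y y_in k _; apply: sg. Qed.

Lemma Derive_n_ext_on g h k x : (forall y, a < y < b -> g y = h y) -> a < x < b ->
  Derive_n g k x = Derive_n h k x.
Proof. by move=> gh /locally_in_interval x_in; apply/Derive_n_ext_loc/(filter_imp _ _ gh). Qed.

Lemma smooth_on_ext g h : (forall x, a < x < b -> g x = h x) ->
  smooth_on a b g -> smooth_on a b h.
Proof.
move=> gh sg k x x_in; apply: ex_derive_n_ext_loc (sg k x x_in).
exact: filter_imp gh (locally_in_interval x_in).
Qed.

Lemma smooth_onD g h : smooth_on a b g -> smooth_on a b h -> smooth_on a b (fun x => g x + h x).
Proof. by move=> sg sh k x x_in; apply: ex_derive_n_plus; apply: smooth_on_locally. Qed.

Lemma smooth_onB g h : smooth_on a b g -> smooth_on a b h -> smooth_on a b (fun x => g x - h x).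
Proof. by move=> sg sh k x x_in; apply: ex_derive_n_minus; apply: smooth_on_locally. Qed.

Lemma smooth_on_cst c : smooth_on a b (fun _ => c).
Proof. by move=> k x _; apply: ex_derive_n_const. Qed.

Lemma smooth_on_sub_cst x0 : smooth_on a b (fun x => x - x0).
Proof.
apply: smooth_onB (smooth_on_cst _) => k x _.
by apply: (ex_derive_n_ext (pow^~ 1%N)) (ex_derive_n_pow _ _ _) => t; rewrite pow_1.
Qed.

Lemma smooth_on_Derive g : smooth_on a b g -> smooth_on a b (Derive g).
Proof.
move=> sg [|k] x x_in //.
by apply: (ex_derive_ext (Derive_n g k.+1)) (sg k.+2 x x_in) => t; rewrite Derive_nS.
Qed.

Lemma smooth_on_Derive_n g p : smooth_on a b g -> smooth_on a b (Derive_n g p).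
Proof.
elim: p g => [|p IHp] g sg //.
by apply: smooth_on_ext _ (IHp _ (smooth_on_Derive sg)) => t _; rewrite Derive_nS.
Qed.

Lemma Derive_mult_on g h x : smooth_on a b g -> smooth_on a b h -> a < x < b ->
  Derive (fun t => g t * h t) x = Derive g x * h x + g x * Derive h x.
Proof. by move=> sg sh x_in; apply: Derive_mult; [apply: (sg 1%N) | apply: (sh 1%N)]. Qed.

Lemma Derive_n_multS g h k x : smooth_on a b g -> smooth_on a b h -> a < x < b ->
  Derive_n (fun t => g t * h t) k.+1 x =
  Derive_n (fun t => Derive g t * h t + g t * Derive h t) k x.
Proof.
move=> sg sh x_in; rewrite Derive_nS.
by apply: Derive_n_ext_on => // y; apply: Derive_mult_on.
Qed.

Lemma smooth_onM g h : smooth_on a b g -> smooth_on a b h -> smooth_on a b (fun t => g t * h t).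
Proof.
suff: forall k g h, smooth_on a b g -> smooth_on a b h ->
    forall j x, (j <= k)%N -> a < x < b -> ex_derive_n (fun t => g t * h t) j x.
  by move=> prod_k sg sh k x; apply: prod_k (leqnn k).
elim=> [|k IHk] {}g {}h sg sh [|[|j]] x // le_jk x_in.
  by apply: ex_derive_mult; [apply: (sg 1%N) | apply: (sh 1%N)].
apply: (ex_derive_ext_loc (Derive_n (fun t => Derive g t * h t + g t * Derive h t) j)).
  by apply: filter_imp (locally_in_interval x_in) => y y_in; rewrite Derive_n_multS.
change (ex_derive_n (fun t => Derive g t * h t + g t * Derive h t) j.+1 x).
have IH' u v : smooth_on a b u -> smooth_on a b v ->
    locally x (fun y => forall i, (i <= j.+1)%coq_nat -> ex_derive_n (fun t => u t * v t) i y).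
  move=> su sv; apply: filter_imp (locally_in_interval x_in) => y y_in i /leP le_ij.
  exact: IHk su sv i y (leq_trans le_ij le_jk) y_in.
by apply: ex_derive_n_plus; apply: IH'; try apply: smooth_on_Derive.
Qed.

Lemma Derive_n_plus_on g h k x : smooth_on a b g -> smooth_on a b h -> a < x < b ->
  Derive_n (fun t => g t + h t) k x = Derive_n g k x + Derive_n h k x.
Proof. by move=> sg sh x_in; apply: Derive_n_plus; apply: smooth_on_locally. Qed.

Lemma Derive_n_minus_on g h k x : smooth_on a b g -> smooth_on a b h -> a < x < b ->
  Derive_n (fun t => g t - h t) k x = Derive_n g k x - Derive_n h k x.
Proof. by move=> sg sh x_in; apply: Derive_n_minus; apply: smooth_on_locally. Qed.

Lemma smooth_on_sum N (F : 'I_N -> R -> R) : (forall c, smooth_on a b (F c)) ->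
  smooth_on a b (fun x => \sum_(c < N) F c x)%R.
Proof.
elim: N F => [|N IHN] F sF.
  by apply: (smooth_on_ext (g := fun _ => 0)) (smooth_on_cst _) => x _; rewrite big_ord0.
apply: smooth_on_ext _ (smooth_onD (IHN _ (fun c => sF _)) (sF ord_max)) => x _.
by rewrite big_ord_recr.
Qed.

Lemma Derive_n_sum_on N (F : 'I_N -> R -> R) k x : (forall c, smooth_on a b (F c)) ->
  a < x < b ->
  Derive_n (fun x => \sum_(c < N) F c x)%R k x = (\sum_(c < N) Derive_n (F c) k x)%R.
Proof.
elim: N F => [|N IHN] F sF x_in.
  rewrite big_ord0 (Derive_n_ext _ (fun _ => 0)) => [|t]; last by rewrite big_ord0.
  by case: k => // k; rewrite Derive_n_const.
rewrite (Derive_n_ext _ (fun x => (\sum_(c < N) F (widen_ord (leqnSn N) c) x)%R + F ord_max x));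
  last by move=> t; rewrite big_ord_recr.
rewrite Derive_n_plus_on ?IHN ?big_ord_recr //.
exact: smooth_on_sum.
Qed.

Ltac smooth_on_tac :=
  repeat first [ assumption | apply: smooth_on_sub_cst | apply: smooth_onB | apply: smooth_onM
               | apply: smooth_on_Derive | apply: smooth_on_cst ].

Lemma vanishes_toM g h p x0 : smooth_on a b g -> smooth_on a b h -> a < x0 < b ->
  vanishes_to g p x0 -> vanishes_to (fun t => g t * h t) p x0.
Proof.
elim: p g h => [|p IHp] g h sg sh x0_in g0 [|j] lt_jp //.
  by move: (g0 0%N lt_jp) => /= ->; rewrite Rmult_0_l.
have sg' := smooth_on_Derive sg; have sh' := smooth_on_Derive sh.
rewrite Derive_n_multS // Derive_n_plus_on ?IHp //; try smooth_on_tac.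
- by rewrite Rplus_0_r.
- exact: vanishes_to_le (leqnSn p) g0.
- exact: vanishes_to_Derive.
Qed.

Lemma vanishes_toB g h p x0 : smooth_on a b g -> smooth_on a b h -> a < x0 < b ->
  vanishes_to g p x0 -> vanishes_to h p x0 -> vanishes_to (fun t => g t - h t) p x0.
Proof.
by move=> sg sh x0_in g0 h0 j lt_jp; rewrite Derive_n_minus_on // g0 // h0 // Rminus_0_r.
Qed.

Lemma Derive_n_sub_cst_mul g j x0 : smooth_on a b g -> a < x0 < b ->
  Derive_n (fun t => (t - x0) * g t) j x0 = INR j * Derive_n g j.-1 x0.
Proof.
elim: j g => [|j IHj] g sg x0_in; first by rewrite /=; ring.
rewrite Derive_n_multS //; last smooth_on_tac.
have D_sub t : Derive (fun t => t - x0) t = 1.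
  by apply: is_derive_unique; auto_derive => //; ring.
rewrite (Derive_n_ext _ (fun t => g t + (t - x0) * Derive g t)); last first.
  by move=> t; rewrite D_sub Rmult_1_l.
rewrite Derive_n_plus_on ?IHj //; try smooth_on_tac.
by case: j {IHj} => [|j]; rewrite ?Derive_nS /=; ring.
Qed.

Lemma vanishes_to_sub_cst_mul g p x0 : smooth_on a b g -> a < x0 < b ->
  vanishes_to g p x0 -> vanishes_to (fun t => (t - x0) * g t) p.+1 x0.
Proof.
move=> sg x0_in g0 [|j] lt_jp; rewrite Derive_n_sub_cst_mul //= ?g0 //; ring.
Qed.

Lemma vanishes_to_Euler f p x0 : smooth_on a b f -> a < x0 < b -> vanishes_to f p x0 ->
  vanishes_to (fun x => (x - x0) * Derive f x - INR p * f x) p.+1 x0.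
Proof.
move=> sf x0_in f0 j lt_jp.
rewrite Derive_n_minus_on // ?Derive_n_scal_l ?Derive_n_sub_cst_mul //; try smooth_on_tac.
have -> : INR j * Derive_n (Derive f) j.-1 x0 = INR j * Derive_n f j x0.
  by case: j {lt_jp} => [|j]; rewrite ?INR_0 ?Rmult_0_l // -Derive_nS.
rewrite -Rmult_minus_distr_r; move: lt_jp; rewrite ltnS leq_eqVlt => /orP[/eqP -> | lt_jp].
  by rewrite Rminus_eq_0 Rmult_0_l.
by rewrite f0 // Rmult_0_r.
Qed.

Lemma vanishes_to_Phi_shape f Q p x0 : smooth_on a b f -> smooth_on a b Q -> a < x0 < b ->
  vanishes_to f p x0 ->
  vanishes_to (fun x => (INR p + 1) * ((x - x0) * Derive f x - INR p * f x) * Q x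
                        - (x - x0) * f x * Derive Q x) p.+1 x0.
Proof.
move=> sf sQ x0_in f0.
apply: vanishes_toB => //; try smooth_on_tac.
  apply: vanishes_toM => //; try smooth_on_tac.
  exact/vanishes_toZ/vanishes_to_Euler.
apply: vanishes_toM => //; try smooth_on_tac.
exact: vanishes_to_sub_cst_mul.
Qed.

Lemma vanishes_to_Psi_shape f Q e p x0 : smooth_on a b f -> smooth_on a b Q -> a < x0 < b ->
  vanishes_to f p.+1 x0 ->
  vanishes_to (fun x => e * Derive f x * Q x - f x * Derive Q x) p x0.
Proof.
move=> sf sQ x0_in f0.
apply: vanishes_toB => //; try smooth_on_tac.
  apply: vanishes_toM => //; try smooth_on_tac.
  exact/vanishes_toZ/vanishes_to_Derive.
apply: vanishes_toM => //; try smooth_on_tac.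
exact: vanishes_to_le (leqnSn p) f0.
Qed.

Lemma smooth_on_Phi_shape f Q x0 e : smooth_on a b f -> smooth_on a b Q ->
  smooth_on a b (fun x => (e + 1) * ((x - x0) * Derive f x - e * f x) * Q x
                          - (x - x0) * f x * Derive Q x).
Proof. by move=> sf sQ; smooth_on_tac. Qed.

Lemma smooth_on_Psi_shape f Q e : smooth_on a b f -> smooth_on a b Q ->
  smooth_on a b (fun x => e * Derive f x * Q x - f x * Derive Q x).
Proof. by move=> sf sQ; smooth_on_tac. Qed.

Lemma taylor_lagrange_on F N x y : smooth_on a b F -> a < x < b -> a < y < b -> x <> y ->
  exists2 z, Rmin x y < z < Rmax x y &
  F y = sum_f_R0 (fun i => (y - x) ^ i / INR (Factorial.fact i) * Derive_n F i x) N +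
        (y - x) ^ N.+1 / INR (Factorial.fact N.+1) * Derive_n F N.+1 z.
Proof.
move=> sF x_in y_in neq_xy; have [lt_xy | lt_yx] := Rlt_le_dec x y.
  have [z [z_in ->]] : exists z, x < z < y /\ _ := Taylor_Lagrange F N x y lt_xy
    (fun t t_in k _ => sF k t (conj (Rlt_le_trans _ _ _ (proj1 x_in) (proj1 t_in))
                                   (Rle_lt_trans _ _ _ (proj2 t_in) (proj2 y_in)))).
  by exists z; rewrite ?Rmin_left ?Rmax_right //; lra.
(* For y < x, expand t |-> F (- t) between - x < - y. *)
have lt_opp : - x < - y by lra.
have D_opp i t : a < - t < b -> Derive_n (fun t => F (- t)) i t = (-1) ^ i * Derive_n F i (- t).
  by move=> t_in; apply/Derive_n_comp_opp/smooth_on_locally.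
have sF_opp t : - x <= t <= - y -> forall k, (k <= N.+1)%coq_nat ->
    ex_derive_n (fun t => F (- t)) k t.
  by move=> t_in k _; apply/ex_derive_n_comp_opp/smooth_on_locally => //; lra.
have [z [z_in]] := Taylor_Lagrange (fun t => F (- t)) N (- x) (- y) lt_opp sF_opp.
rewrite !Ropp_involutive => ->; exists (- z); rewrite ?Rmin_right ?Rmax_left; try lra.
have opp_pow i : (- y - - x) ^ i * (-1) ^ i = (y - x) ^ i.
  by rewrite -Rpow_mult_distr; congr (_ ^ _); ring.
congr (_ + _).
  apply: PartSum.sum_eq => i _; rewrite D_opp ?Ropp_involutive // -(opp_pow i).
  by field; apply: INR_fact_neq_0.
rewrite D_opp -?(opp_pow N.+1); last lra.
by field; apply: INR_fact_neq_0.
Qed.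

Lemma taylor_vanishes_to F N x y : smooth_on a b F -> a < x < b -> a < y < b -> x <> y ->
  vanishes_to F N x ->
  exists2 z, Rmin x y <= z <= Rmax x y &
  F y = (y - x) ^ N / INR (Factorial.fact N) *
        (Derive_n F N x + (y - x) / INR N.+1 * Derive_n F N.+1 z).
Proof.
move=> sF x_in y_in neq_xy F0.
have [z z_in ->] := taylor_lagrange_on N sF x_in y_in neq_xy.
exists z; first lra.
have sum_top (u : nat -> R) M : (forall i, (i < M)%N -> u i = 0) -> sum_f_R0 u M = u M.
  elim: M => [|M IHM] u0 //=.
  rewrite IHM => [|i lt_iM]; last exact/u0/ltnW.
  by rewrite u0 ?Rplus_0_l.
rewrite sum_top => [|i lt_iN]; last by rewrite F0 // Rmult_0_r.
rewrite Rfunctions.fact_simpl mult_INR -tech_pow_Rmult.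
by field; split; [apply: not_0_INR | apply: INR_fact_neq_0].
Qed.

End SmoothOn.

Section Determinant.
Variables (n m : nat) (phi : 'I_n.+1 -> R -> R) (alpha : 'I_m -> nat).

(* [Dmatrix phi alpha x y] is [Dmatrix_row0 (fun c => phi c x) y] by definition. *)
Definition Dmatrix_row0 (v : 'I_n.+1 -> R) (y : 'I_m -> R) : 'M[R]_n.+1 :=
  \matrix_(p, c) if (p == 0%N :> nat) then v c
                 else nth (fun _ => 0) (lower_rows phi alpha y) p.-1 c.

Definition Dcofactor (y : 'I_m -> R) (c : 'I_n.+1) : R :=
  cofactor (Dmatrix_row0 (fun _ => 0) y) ord0 c.

Lemma det_Dmatrix_row0 v y :
  determinant (Dmatrix_row0 v y) = (\sum_c v c * Dcofactor y c)%R.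
Proof.
rewrite (expand_det_row _ ord0); apply: eq_bigr => c _.
rewrite mxE /=; congr (_ * _)%R.
by rewrite /Dcofactor /cofactor; congr (_ * determinant _)%R; apply/matrixP => i j; rewrite !mxE.
Qed.

Lemma Ddet_expand x y : Ddet phi alpha x y = (\sum_c phi c x * Dcofactor y c)%R.
Proof. exact: det_Dmatrix_row0. Qed.

Lemma Dmatrix_row0_lower y i r : (\sum_(j < m) alpha j)%N = n -> (r < alpha i)%N ->
  exists2 p : 'I_n.+1, p != ord0 &
    forall v c, Dmatrix_row0 v y p c = Derive_n (phi c) r (y i).
Proof.
move=> alpha_sum lt_ri.
pose ss := [seq [seq (fun c : 'I_n.+1 => Derive_n (phi c) r' (y j)) | r' <- seq.iota 0%N (alpha j)]
           | j <- enum 'I_m].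
have shape_ss : shape ss = [seq alpha j | j <- enum 'I_m].
  by rewrite /shape -map_comp; apply: eq_map => j /=; rewrite size_map size_iota.
have size_i : nth 0%N (shape ss) i = alpha i.
  by rewrite shape_ss (nth_map i) ?size_enum_ord // nth_ord_enum.
have lt_pn : (flatten_index (shape ss) i r < n)%N.
  have := @flatten_indexP (shape ss) i r; rewrite size_i => /(_ lt_ri).
  by rewrite {2}shape_ss sumnE big_map big_enum alpha_sum.
exists (@Ordinal n.+1 (flatten_index (shape ss) i r).+1 lt_pn) => // v c.
rewrite mxE /= -/ss nth_flatten flatten_indexKl ?flatten_indexKr ?size_i //.
by rewrite (nth_map i) ?size_enum_ord // nth_ord_enum (nth_map 0%N) ?size_iota // nth_iota.
Qed.

End Determinant.

Section Iteration.
Variables (a b : R) (n m : nat) (phi : 'I_n.+1 -> R -> R) (alpha : 'I_m -> nat).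
Variables xs xk : 'I_m -> R.
Hypothesis phi_smooth : forall c, smooth_on a b (phi c).
Hypothesis alpha_sum : (\sum_(j < m) alpha j)%N = n.
Hypothesis alpha_pos : forall j, (0 < alpha j)%N.
Hypothesis xs_in : forall i, a < xs i < b.
Hypothesis xk_in : forall i, a < xk i < b.
Hypothesis Qfun_neq0 : forall i, Qfun phi alpha xk i (xk i) <> 0.
Hypothesis iter_bracket_neq0 : forall i, iter_bracket phi alpha xs xk i <> 0.

Lemma smooth_on_Ddet y : smooth_on a b (fun x => Ddet phi alpha x y).
Proof.
have sF c : smooth_on a b (fun x => phi c x * Dcofactor phi alpha y c).
  exact: smooth_onM (phi_smooth c) (smooth_on_cst _).
apply: smooth_on_ext _ (smooth_on_sum sF) => x _.
by rewrite Ddet_expand; apply: eq_bigr => c _; rewrite RmultE.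
Qed.

Lemma smooth_on_fpoly : smooth_on a b (fpoly phi alpha xs).
Proof. exact: smooth_on_Ddet. Qed.

Lemma smooth_on_Qfun i : smooth_on a b (Qfun phi alpha xk i).
Proof. exact/smooth_on_Derive_n/smooth_on_Ddet. Qed.

Lemma fpoly_vanishes_to i : vanishes_to (fpoly phi alpha xs) (alpha i) (xs i).
Proof.
move=> j lt_ji.
pose F c x := phi c x * Dcofactor phi alpha xs c.
have sF c : smooth_on a b (F c) by apply: smooth_onM (phi_smooth c) (smooth_on_cst _).
rewrite (Derive_n_ext _ (fun x => \sum_c F c x)%R) => [|x]; last first.
  by rewrite /fpoly Ddet_expand; apply: eq_bigr => c _; rewrite /F RmultE.
rewrite (Derive_n_sum_on _ sF) //.
rewrite (eq_bigr (fun c => Derive_n (phi c) j (xs i) * Dcofactor phi alpha xs c)%R) => [|c _];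
  last by rewrite /F Derive_n_scal_r RmultE.
have [p p_neq0 row_p] := Dmatrix_row0_lower phi xs alpha_sum lt_ji.
by rewrite -det_Dmatrix_row0; apply: (determinant_alternate p_neq0) => c; rewrite row_p mxE.
Qed.

Lemma smooth_on_Phifun i : smooth_on a b (Phifun phi alpha xs xk i).
Proof. exact: (smooth_on_Phi_shape _ _ smooth_on_fpoly (smooth_on_Qfun i)). Qed.

Lemma smooth_on_Psifun i : smooth_on a b (Psifun phi alpha xs xk i).
Proof. exact: (smooth_on_Psi_shape _ smooth_on_fpoly (smooth_on_Qfun i)). Qed.

Lemma Phifun_vanishes_to i : vanishes_to (Phifun phi alpha xs xk i) (alpha i).+1 (xs i).
Proof.
exact: (vanishes_to_Phi_shape smooth_on_fpoly (smooth_on_Qfun i) (xs_in i)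
                              (fpoly_vanishes_to (i := i))).
Qed.

Lemma Psifun_vanishes_to i : vanishes_to (Psifun phi alpha xs xk i) (alpha i).-1 (xs i).
Proof.
apply: (vanishes_to_Psi_shape (INR (alpha i) + 1) smooth_on_fpoly (smooth_on_Qfun i) (xs_in i)).
by rewrite prednK //; apply: fpoly_vanishes_to.
Qed.

Lemma Phifun_at_iterate i : Phifun phi alpha xs xk i (xk i) =
  (INR (alpha i) + 1) * Qfun phi alpha xk i (xk i) *
  ((xk i - xs i) * iter_bracket phi alpha xs xk i - INR (alpha i) * fpoly phi alpha xs (xk i)).
Proof.
rewrite /Phifun /iter_bracket /=; field.
by split; [apply: Qfun_neq0 | have := pos_INR (alpha i); lra].
Qed.

Lemma Psifun_at_iterate i : Psifun phi alpha xs xk i (xk i) =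
  (INR (alpha i) + 1) * Qfun phi alpha xk i (xk i) * iter_bracket phi alpha xs xk i.
Proof.
rewrite /Psifun /iter_bracket /=; field.
by split; [apply: Qfun_neq0 | have := pos_INR (alpha i); lra].
Qed.

Lemma next_iter_sub_root i : next_iter phi alpha xs xk i - xs i =
  Phifun phi alpha xs xk i (xk i) / Psifun phi alpha xs xk i (xk i).
Proof.
rewrite Phifun_at_iterate Psifun_at_iterate /next_iter /=; field.
by split; [apply: iter_bracket_neq0 | split; [apply: Qfun_neq0 | have := pos_INR (alpha i); lra]].
Qed.

Lemma next_iter_at_root i : xk i = xs i -> next_iter phi alpha xs xk i - xs i = 0.
Proof.
move=> xk_xs; rewrite /next_iter /= xk_xs.
move: (fpoly_vanishes_to (i := i) (j := 0%N)) => /= -> //.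
by rewrite Rmult_0_r /Rdiv Rmult_0_l Rminus_0_r Rminus_eq_0.
Qed.

Lemma next_iter_error_taylor i : xk i <> xs i ->
  exists z w, Rmin (xs i) (xk i) <= z <= Rmax (xs i) (xk i) /\
              Rmin (xs i) (xk i) <= w <= Rmax (xs i) (xk i) /\
  next_iter phi alpha xs xk i - xs i =
  (xk i - xs i) ^ 2 *
    (Derive_n (Phifun phi alpha xs xk i) (alpha i + 1) (xs i)
     + (xk i - xs i) / (INR (alpha i) + 2)
       * Derive_n (Phifun phi alpha xs xk i) (alpha i + 2) z) /
  (INR (alpha i) * (INR (alpha i) + 1) *
    (Derive_n (Psifun phi alpha xs xk i) (alpha i - 1) (xs i)
     + (xk i - xs i) / INR (alpha i) * Derive_n (Psifun phi alpha xs xk i) (alpha i) w)).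
Proof.
move=> xk_neq_xs; have xs_neq_xk : xs i <> xk i by move=> /esym.
have [z z_in Phi_eq] := taylor_vanishes_to (smooth_on_Phifun i) (xs_in i) (xk_in i) xs_neq_xk
  (Phifun_vanishes_to (i := i)).
have [w w_in Psi_eq] := taylor_vanishes_to (smooth_on_Psifun i) (xs_in i) (xk_in i) xs_neq_xk
  (Psifun_vanishes_to (i := i)).
exists z, w; do 2!split => //.
have Psi_neq0 : Psifun phi alpha xs xk i (xk i) <> 0.
  rewrite Psifun_at_iterate; repeat apply: Rmult_integral_contrapositive_currified => //.
  by have := pos_INR (alpha i); lra.
rewrite next_iter_sub_root Phi_eq; rewrite Psi_eq in Psi_neq0 *.
have d_neq0 : xk i - xs i <> 0 by move=> /Rminus_diag_uniq.
move: (alpha_pos i) Psi_neq0; rewrite addn1 addn2 subn1.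
case: (alpha i) => [|p] // _; rewrite succnK.
rewrite !Rfunctions.fact_simpl !mult_INR !S_INR -!tech_pow_Rmult => Psi_neq0.
set S := (Derive_n (Psifun _ _ _ _ _) _ _ + _) in Psi_neq0 *.
move: Psi_neq0 => /Rmult_neq_0_reg[_ S_neq0].
have := pos_INR p; have := INR_fact_neq_0 p; have := pow_nonzero _ p d_neq0.
by move=> dp_neq0 fact_neq0 p_ge0; field; repeat split => //; lra.
Qed.

End Iteration.

Lemma lincomb_bound m (C d : 'I_m -> R) A dl :
  (forall s, Rabs (C s) <= A) -> (forall s, Rabs (d s) < dl) ->
  Rabs (lincomb C d) <= INR m * A * dl.
Proof.
rewrite /lincomb; elim: m C d => [|m IHm] C d C_le d_lt.
  by rewrite big_ord0 Rabs_R0 Rmult_0_l Rmult_0_l; apply: Rle_refl.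
pose C' s := C (widen_ord (leqnSn m) s); pose d' s := d (widen_ord (leqnSn m) s).
have -> : (\sum_(s < m.+1) C s * d s)%R = (\sum_(s < m) C' s * d' s)%R + C ord_max * d ord_max.
  by rewrite big_ord_recr.
apply: Rle_trans (Rabs_triang _ _) _.
have := IHm C' d' (fun s => C_le _) (fun s => d_lt _).
have : Rabs (C ord_max * d ord_max) <= A * dl.
  rewrite Rabs_mult; apply: Rmult_le_compat; try apply: Rabs_pos; first exact: C_le.
  exact/Rlt_le/d_lt.
rewrite S_INR; lra.
Qed.

Lemma cubic_error_bound (al d dl c mm A B M K P Fa LA LB Ph2 Ps1 : R) :
  0 < al -> 0 < dl <= c -> Rabs d < dl ->
  Rabs LA <= mm * A * dl -> Rabs Ph2 <= M ->
  Rabs LB <= mm * B * dl -> Rabs Ps1 <= K -> 0 < P <= Rabs Fa ->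
  c ^ 2 * (mm * A + M / (al + 2)) <
    (al + 1) ^ 2 * al * P ^ 2 - c * (al + 1) * (al * B * mm + K) ->
  Rabs (d ^ 2 * (LA + d / (al + 2) * Ph2) /
        (al * (al + 1) * ((al + 1) * Fa ^ 2 + LB + d / al * Ps1))) < dl ^ 3 / c ^ 2.
Proof.
move=> al_gt0 [dl_gt0 dl_le_c] d_lt LA_le Ph2_le LB_le Ps1_le [P_gt0 P_le] cond.
set N := mm * A + M / (al + 2).
set X := LA + d / (al + 2) * Ph2.
set E := al * (al + 1) * _.
have d_Ph2 : Rabs (d * Ph2) <= dl * M.
  by rewrite Rabs_mult; apply: Rmult_le_compat; try apply: Rabs_pos; lra.
have d_Ps1 : Rabs (d * Ps1) <= dl * K.
  by rewrite Rabs_mult; apply: Rmult_le_compat; try apply: Rabs_pos; lra.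
have mmA_ge0 : 0 <= mm * A by have := Rabs_pos LA; nra.
have mmB_ge0 : 0 <= mm * B by have := Rabs_pos LB; nra.
have N_ge0 : 0 <= N.
  by apply: Rplus_le_le_0_compat mmA_ge0 _; apply: Rdiv_le_0_compat; have := Rabs_pos Ph2; lra.
have X_le : Rabs X <= dl * N.
  apply: Rle_trans (Rabs_triang _ _) _.
  rewrite (_ : d / (al + 2) * Ph2 = d * Ph2 / (al + 2)); last by field; lra.
  rewrite Rabs_div ?(Rabs_pos_eq (al + 2)); try lra.
  have : Rabs (d * Ph2) / (al + 2) <= dl * M / (al + 2).
    by apply: Rmult_le_compat_r d_Ph2; apply/Rlt_le/Rinv_0_lt_compat; lra.
  rewrite /N /Rdiv; lra.
(* Since [|LB|] and [|d Ps1|] are O(dl), the denominator stays above [c^2 N]. *)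
have E_gt : c ^ 2 * N < E.
  have -> : E = al * (al + 1) ^ 2 * Fa ^ 2 + al * (al + 1) * LB + (al + 1) * (d * Ps1).
    by rewrite /E; field; lra.
  have K_ge0 : 0 <= K by have := Rabs_pos Ps1; lra.
  have al_al1 : 0 < al * (al + 1) by nra.
  have Fa_bound : al * (al + 1) ^ 2 * P ^ 2 <= al * (al + 1) ^ 2 * Fa ^ 2.
    apply: Rmult_le_compat_l; first nra.
    by rewrite -(pow2_abs Fa); apply: pow_incr; lra.
  have LB_bound : al * (al + 1) * - (mm * B * c) <= al * (al + 1) * LB.
    apply: Rmult_le_compat_l; first lra.
    by have := Rle_abs (- LB); rewrite Rabs_Ropp; nra.
  have Ps1_bound : (al + 1) * - (c * K) <= (al + 1) * (d * Ps1).
    apply: Rmult_le_compat_l; first lra.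
    by have := Rle_abs (- (d * Ps1)); rewrite Rabs_Ropp; nra.
  rewrite /N; lra.
have E_gt0 : 0 < E by nra.
have d2_lt : d ^ 2 < dl ^ 2 by rewrite -(pow2_abs d); have := Rabs_pos d; nra.
rewrite Rabs_div ?(Rabs_pos_eq E); try lra.
rewrite Rabs_mult (Rabs_pos_eq (d ^ 2)); last exact: pow2_ge_0.
apply/Rlt_div_l => //.
rewrite (_ : dl ^ 3 / c ^ 2 * E = dl ^ 3 * E / c ^ 2); last by field; lra.
have c2_gt0 : c ^ 2 > 0 by nra.
apply/(Rlt_div_r _ _ _ c2_gt0).
have d2_ge0 := pow2_ge_0 d.
have num_bound : d ^ 2 * Rabs X * c ^ 2 <= d ^ 2 * dl * (c ^ 2 * N).
  rewrite (_ : d ^ 2 * dl * (c ^ 2 * N) = d ^ 2 * (dl * N) * c ^ 2); last ring.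
  by apply: Rmult_le_compat_r; [lra | apply: Rmult_le_compat_l].
have den_bound : d ^ 2 * dl * (c ^ 2 * N) <= d ^ 2 * dl * E.
  by apply: Rmult_le_compat_l; [apply: Rmult_le_pos | lra]; lra.
have : d ^ 2 * dl * E < dl ^ 3 * E.
  by apply: Rmult_lt_compat_r => //; rewrite (_ : dl ^ 3 = dl ^ 2 * dl); [nra | ring].
lra.
Qed.

Theorem mainTheorem1
  (a b : R) (n m : nat) (phi : 'I_n.+1 -> R -> R) (alpha : 'I_m -> nat)
  (xs xk : 'I_m -> R) (k : nat)
  (Acoef Bcoef : 'I_m -> 'I_m -> R) (A B M K P c q : R) :
  a < b ->
  (forall j, smooth_on a b (phi j)) ->
  chebyshev_system a b phi ->
  (forall j, (0 < alpha j)%N) ->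
  (\sum_(j < m) alpha j)%N = n ->
  injective xs ->
  (forall i, a < xs i < b) ->
  (forall i, a < xk i < b) ->
  (* the iteration (star) is well defined *)
  (forall i, Qfun phi alpha xk i (xk i) <> 0) ->
  (forall i, iter_bracket phi alpha xs xk i <> 0) ->
  (forall i, Derive_n (Phifun phi alpha xs xk i) (alpha i + 1) (xs i)
             = lincomb (Acoef i) (fun s => xk s - xs s)) ->
  (forall i, Derive_n (Psifun phi alpha xs xk i) (alpha i - 1) (xs i)
             = (INR (alpha i) + 1) * (Derive_n (fpoly phi alpha xs) (alpha i) (xs i)) ^ 2
               + lincomb (Bcoef i) (fun s => xk s - xs s)) ->
  (forall i s, Rabs (Acoef i s) <= A) ->
  (forall i s, Rabs (Bcoef i s) <= B) ->
  (forall i x, Rmin (xs i) (xk i) <= x <= Rmax (xs i) (xk i) ->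
     Rabs (Derive_n (Phifun phi alpha xs xk i) (alpha i + 2) x) <= M) ->
  (forall i x, Rmin (xs i) (xk i) <= x <= Rmax (xs i) (xk i) ->
     Rabs (Derive_n (Psifun phi alpha xs xk i) (alpha i) x) <= K) ->
  0 < P ->
  (forall i, P <= Rabs (Derive_n (fpoly phi alpha xs) (alpha i) (xs i))) ->
  0 < c -> 0 < q < 1 ->
  (forall i,
     c ^ 2 * (INR m * A + M / (INR (alpha i) + 2))
     < (INR (alpha i) + 1) ^ 2 * INR (alpha i) * P ^ 2
       - c * (INR (alpha i) + 1) * (INR (alpha i) * B * INR m + K)) ->
  (forall i, Rabs (xk i - xs i) < c * q ^ (3 ^ k)%nat) ->
  forall i, Rabs (next_iter phi alpha xs xk i - xs i) < c * q ^ (3 ^ k.+1)%nat.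
Proof.
move=> _ phi_smooth _ alpha_pos alpha_sum _ xs_in xk_in Q_neq0 bracket_neq0 Phi_Taylor Psi_Taylor
  A_bound B_bound M_bound K_bound P_gt0 P_bound c_gt0 q_bounds cond xk_close i.
set dl := c * q ^ (3 ^ k)%nat.
have dl_bounds : 0 < dl <= c.
  have q_pow : 0 < q ^ (3 ^ k)%nat <= 1.
    by split; [apply: pow_lt | rewrite -(pow1 (3 ^ k)); apply: pow_incr]; lra.
  by rewrite /dl; split; nra.
have -> : c * q ^ (3 ^ k.+1)%nat = dl ^ 3 / c ^ 2.
  by rewrite /dl expnSr pow_mult; field; lra.
have [xk_xs | xk_neq_xs] := Req_dec (xk i) (xs i).
  rewrite (next_iter_at_root phi_smooth alpha_sum alpha_pos xs_in xk_xs) Rabs_R0.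
  by apply: Rdiv_lt_0_compat; apply: pow_lt; lra.
have [z [w [z_in [w_in ->]]]] := next_iter_error_taylor phi_smooth alpha_sum alpha_pos
  xs_in xk_in Q_neq0 bracket_neq0 xk_neq_xs.
rewrite Phi_Taylor Psi_Taylor; apply: cubic_error_bound (cond i) => //.
- exact/lt_0_INR/ltP.
- exact: lincomb_bound.
- exact: M_bound.
- exact: lincomb_bound.
- exact: K_bound.
Qed.
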